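(* Let $t>0$ be a real number such that $\zeta(\tfrac12+it)=0$. For $k\ge 1$ let $H_k=\sum_{n=1}^{k}\frac1n$ and $$D_k(t)=2\sum_{n=1}^{k}\sum_{m=n+1}^{k}\frac{(-1)^{m}(-1)^{n+1}}{\sqrt{mn}}\cos\!\big(t\log(m/n)\big).$$ Then $\lim_{k\to\infty}\big(H_k-D_k(t)\big)=0$. Consequently $$\gamma=\lim_{k\to\infty}\Big(D_k(t)-\log k\Big),$$ where $\gamma=\lim_{k\to\infty}(H_k-\log k)$ is the Euler–Mascheroni constant.
   Context: $\zeta$ denotes the Riemann zeta function (analytically continued to $\mathbb{C}\setminus\{1\}$). The hypothesis says that $\tfrac12+it$ is a non-trivial zero of $\zeta$ lying on the critical line $\Re(s)=\tfrac12$. *)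

From Stdlib Require Import Reals Lra.
Open Scope R_scope.

Fixpoint sum1 (f : nat -> R) (k : nat) : R :=
  match k with
  | O => 0
  | S k' => sum1 f k' + f (S k')
  end.

Definition Hk (k : nat) : R := sum1 (fun n => / INR n) k.

Definition Dk (t : R) (k : nat) : R :=
  2 * sum1 (fun n =>
         sum1 (fun m =>
                 if Nat.ltb n m then
                   (-1) ^ m * (-1) ^ (n + 1) / sqrt (INR m * INR n)
                   * cos (t * ln (INR m / INR n))
                 else 0) k) k.

Definition Cx : Type := (R * R)%type.
Definition Cx_div (z w : Cx) : Cx :=
  let (a, b) := z in let (c, d) := w in
  ((a * c + b * d) / (c * c + d * d), (b * c - a * d) / (c * c + d * d)).

(* Partial sums of the Dirichlet eta series eta(s) = sum_{n>=1} (-1)^(n+1) n^(-s)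
   at s = 1/2 + i t, using n^(-1/2 - i t) = n^(-1/2) (cos(t ln n) - i sin(t ln n)). *)
Definition eta_partial_re (t : R) (N : nat) : R :=
  sum1 (fun n => (-1) ^ (n + 1) / sqrt (INR n) * cos (t * ln (INR n))) N.
Definition eta_partial_im (t : R) (N : nat) : R :=
  sum1 (fun n => - ((-1) ^ (n + 1) / sqrt (INR n) * sin (t * ln (INR n)))) N.

Definition eta_crit_is (t : R) (z : Cx) : Prop :=
  Un_cv (eta_partial_re t) (fst z) /\ Un_cv (eta_partial_im t) (snd z).

(* 1 - 2^(1 - s) at s = 1/2 + i t, i.e. 1 - sqrt 2 (cos(t ln 2) - i sin(t ln 2)). *)
Definition eta_factor_crit (t : R) : Cx :=
  (1 - sqrt 2 * cos (t * ln 2), sqrt 2 * sin (t * ln 2)).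

(* On Re s > 0 (s <> 1), the analytically continued zeta satisfies
   zeta(s) = eta(s) / (1 - 2^(1-s)).  zeta(1/2 + i t) = z: *)
Definition zeta_crit_is (t : R) (z : Cx) : Prop :=
  exists e : Cx, eta_crit_is t e /\ Cx_div e (eta_factor_crit t) = z.

(* Let η_k(s) = Σ_{n≤k} (-1)^(n+1) n^(-s) be the partial sums of the alternating
   zeta series.  On the critical line |n^(-s)|² = 1/n, so expanding |η_k(1/2+it)|²
   the diagonal gives H_k and the cross terms n < m give -D_k(t), by
   cos(t log m - t log n) = cos·cos + sin·sin:  H_k - D_k(t) = |η_k(1/2+it)|².
   Since 1 - 2^(1-s) does not vanish on the critical line, a zero of ζ there is a
   zero of η, hence η_k → 0 and H_k - D_k(t) → 0.  Subtracting this from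
   H_k - log k → γ gives the second claim. *)
From Stdlib Require Import Reals Lra Lia.
Open Scope R_scope.

Lemma sum1_ext f g k :
  (forall n, (1 <= n <= k)%nat -> f n = g n) -> sum1 f k = sum1 g k.
Proof.
  induction k as [|k IH]; intros Hfg; simpl; [reflexivity|].
  rewrite IH by (intros; apply Hfg; lia). rewrite Hfg by lia. reflexivity.
Qed.

Lemma sum1_eq0 f k : (forall n, (1 <= n <= k)%nat -> f n = 0) -> sum1 f k = 0.
Proof.
  induction k as [|k IH]; intros Hf; simpl; [reflexivity|].
  rewrite IH by (intros; apply Hf; lia). rewrite Hf by lia. ring.
Qed.

Lemma sum1_plus f g k : sum1 (fun n => f n + g n) k = sum1 f k + sum1 g k.
Proof. induction k as [|k IH]; simpl; [|rewrite IH]; ring. Qed.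

Lemma sum1_opp f k : sum1 (fun n => - f n) k = - sum1 f k.
Proof. induction k as [|k IH]; simpl; [|rewrite IH]; ring. Qed.

Lemma sum1_mult_r f c k : sum1 (fun n => f n * c) k = sum1 f k * c.
Proof. induction k as [|k IH]; simpl; [|rewrite IH]; ring. Qed.

Lemma pow_m1_sqr n : ((-1) ^ n) ^ 2 = 1.
Proof. rewrite <- pow_mult, Nat.mul_comm. apply pow_1_even. Qed.

Lemma ln_le_sub1 x : 0 < x -> ln x <= x - 1.
Proof. intros Hx. pose proof (exp_ineq1_le (ln x)) as H. rewrite exp_ln in H; lra. Qed.

Lemma ln_sub_le a b : 0 < a -> 0 < b -> ln a - ln b <= a / b - 1.
Proof.
  intros Ha Hb.
  replace (ln a - ln b) with (ln (a / b)) by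
    (unfold Rdiv; rewrite ln_mult, ln_Rinv by (try apply Rinv_0_lt_compat; lra); ring).
  apply ln_le_sub1, Rdiv_lt_0_compat; assumption.
Qed.

Lemma ln_succ_sub_bounds x : 0 < x -> / (x + 1) <= ln (x + 1) - ln x <= / x.
Proof.
  intros Hx. split.
  - pose proof (ln_sub_le x (x + 1) Hx ltac:(lra)) as H.
    replace (x / (x + 1) - 1) with (- / (x + 1)) in H by (field; lra). lra.
  - pose proof (ln_sub_le (x + 1) x ltac:(lra) Hx) as H.
    replace ((x + 1) / x - 1) with (/ x) in H by (field; lra). exact H.
Qed.

Lemma INR_S_pos k : 0 < INR (S k).
Proof. apply lt_0_INR; lia. Qed.

Lemma ln_succ_le_Hk k : ln (INR (S k)) <= Hk k.
Proof.
  induction k as [|k IH].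
  - unfold Hk; simpl. rewrite ln_1. lra.
  - change (Hk (S k)) with (Hk k + / INR (S k)).
    pose proof (ln_succ_sub_bounds _ (INR_S_pos k)) as [_ H].
    rewrite <- S_INR in H. lra.
Qed.

Lemma Hk_sub_ln_succ_decreasing : Un_decreasing (fun k => Hk (S k) - ln (INR (S k))).
Proof.
  intros k. change (Hk (S (S k))) with (Hk (S k) + / INR (S (S k))).
  pose proof (ln_succ_sub_bounds _ (INR_S_pos k)) as [H _].
  rewrite <- !S_INR in H. lra.
Qed.

Lemma Hk_sub_ln_succ_ge0 k : 0 <= Hk (S k) - ln (INR (S k)).
Proof.
  pose proof (ln_succ_le_Hk (S k)).
  pose proof (ln_increasing _ _ (INR_S_pos k) (lt_INR _ _ (Nat.lt_succ_diag_r (S k)))).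
  lra.
Qed.

Lemma euler_gamma_exists : exists gamma, Un_cv (fun k => Hk k - ln (INR k)) gamma.
Proof.
  assert (Hlb : has_lb (fun k => Hk (S k) - ln (INR (S k)))).
  { exists 0. intros x [k ->]. unfold opp_seq. pose proof (Hk_sub_ln_succ_ge0 k). lra. }
  destruct (decreasing_cv _ Hk_sub_ln_succ_decreasing Hlb) as [gamma Hgamma].
  exists gamma. apply (CV_shift _ 1).
  eapply Un_cv_ext; [|exact Hgamma]. intros k. now rewrite Nat.add_1_r.
Qed.

Definition eta_coef (n : nat) : R := (-1) ^ (n + 1) / sqrt (INR n).
Definition eta_term_re (t : R) (n : nat) : R := eta_coef n * cos (t * ln (INR n)).
Definition eta_term_im (t : R) (n : nat) : R := - (eta_coef n * sin (t * ln (INR n))).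

Lemma eta_partial_re_S t k :
  eta_partial_re t (S k) = eta_partial_re t k + eta_term_re t (S k).
Proof. reflexivity. Qed.

Lemma eta_partial_im_S t k :
  eta_partial_im t (S k) = eta_partial_im t k + eta_term_im t (S k).
Proof. reflexivity. Qed.

Lemma eta_term_norm t n : (1 <= n)%nat ->
  eta_term_re t n ^ 2 + eta_term_im t n ^ 2 = / INR n.
Proof.
  intros Hn.
  assert (Pn : 0 < INR n) by (apply lt_0_INR; lia).
  pose proof (sqrt_lt_R0 _ Pn).
  unfold eta_term_re, eta_term_im, eta_coef.
  replace (_ + _) with (((-1) ^ (n + 1)) ^ 2 * (Rsqr (sin (t * ln (INR n))) +
    Rsqr (cos (t * ln (INR n)))) / (sqrt (INR n) * sqrt (INR n)))
    by (unfold Rsqr; field; lra).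
  rewrite pow_m1_sqr, sin2_cos2, sqrt_sqrt by lra. field. lra.
Qed.

Definition Dk_term (t : R) (n m : nat) : R :=
  if Nat.ltb n m then
    (-1) ^ m * (-1) ^ (n + 1) / sqrt (INR m * INR n) * cos (t * ln (INR m / INR n))
  else 0.

Lemma Dk_term_lt t n m : (1 <= n < m)%nat ->
  Dk_term t n m = - (eta_term_re t n * eta_term_re t m + eta_term_im t n * eta_term_im t m).
Proof.
  intros Hnm. unfold Dk_term. replace (Nat.ltb n m) with true by (symmetry; apply Nat.ltb_lt; lia).
  assert (Pn : 0 < INR n) by (apply lt_0_INR; lia).
  assert (Pm : 0 < INR m) by (apply lt_0_INR; lia).
  pose proof (sqrt_lt_R0 _ Pn). pose proof (sqrt_lt_R0 _ Pm).
  rewrite sqrt_mult by lra.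
  unfold Rdiv at 2. rewrite ln_mult, ln_Rinv by (try apply Rinv_0_lt_compat; lra).
  replace (t * (ln (INR m) + - ln (INR n))) with (t * ln (INR m) - t * ln (INR n)) by ring.
  rewrite cos_minus. unfold eta_term_re, eta_term_im, eta_coef. rewrite !pow_add.
  field. lra.
Qed.

Lemma Dk_S t k : Dk t (S k) =
  Dk t k - 2 * (eta_partial_re t k * eta_term_re t (S k)
                + eta_partial_im t k * eta_term_im t (S k)).
Proof.
  change (Dk t (S k)) with (2 * sum1 (fun n => sum1 (Dk_term t n) (S k)) (S k)).
  change (Dk t k) with (2 * sum1 (fun n => sum1 (Dk_term t n) k) k).
  assert (Hlast : sum1 (Dk_term t (S k)) (S k) = 0).
  { apply sum1_eq0. intros m Hm. unfold Dk_term.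
    replace (Nat.ltb (S k) m) with false by (symmetry; apply Nat.ltb_ge; lia). reflexivity. }
  assert (Hcol : sum1 (fun n => Dk_term t n (S k)) k =
    - (eta_partial_re t k * eta_term_re t (S k) + eta_partial_im t k * eta_term_im t (S k))).
  { unfold eta_partial_re, eta_partial_im.
    rewrite <- !sum1_mult_r, <- sum1_plus, <- sum1_opp.
    apply sum1_ext. intros n Hn. apply Dk_term_lt. lia. }
  change (sum1 (fun n => sum1 (Dk_term t n) (S k)) (S k)) with
    (sum1 (fun n => sum1 (Dk_term t n) k + Dk_term t n (S k)) k
     + sum1 (Dk_term t (S k)) (S k)).
  rewrite Hlast, sum1_plus, Hcol. ring.
Qed.

Lemma Hk_sub_Dk_eq_eta_norm t k :
  Hk k - Dk t k = eta_partial_re t k ^ 2 + eta_partial_im t k ^ 2.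
Proof.
  induction k as [|k IH].
  - unfold Hk, Dk, eta_partial_re, eta_partial_im; simpl; ring.
  - change (Hk (S k)) with (Hk k + / INR (S k)).
    rewrite Dk_S, eta_partial_re_S, eta_partial_im_S,
      <- (eta_term_norm t (S k)) by lia.
    replace (Hk k) with (Dk t k + (eta_partial_re t k ^ 2 + eta_partial_im t k ^ 2))
      by (rewrite <- IH; ring).
    ring.
Qed.

Lemma Cx_div_eq0 a b c d :
  c * c + d * d <> 0 -> Cx_div (a, b) (c, d) = (0, 0) -> a = 0 /\ b = 0.
Proof.
  intros Hcd Hdiv. injection Hdiv as Hre Him.
  apply Rmult_integral in Hre as [Hre|Hre]; [|apply Rinv_neq_0_compat in Hcd; contradiction].
  apply Rmult_integral in Him as [Him|Him]; [|apply Rinv_neq_0_compat in Hcd; contradiction].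
  split; apply (Rmult_eq_reg_r (c * c + d * d)); try exact Hcd; rewrite Rmult_0_l.
  - replace (a * _) with (c * (a * c + b * d) - d * (b * c - a * d)) by ring.
    rewrite Hre, Him. ring.
  - replace (b * _) with (d * (a * c + b * d) + c * (b * c - a * d)) by ring.
    rewrite Hre, Him. ring.
Qed.

(* |1 - 2^(1/2 - it)|² = 3 - 2√2 cos(t log 2) ≥ 3 - 2√2 > 0. *)
Lemma eta_factor_crit_norm_neq0 t :
  let (c, d) := eta_factor_crit t in c * c + d * d <> 0.
Proof.
  unfold eta_factor_crit.
  pose proof (sin2_cos2 (t * ln 2)) as Hsc. unfold Rsqr in Hsc.
  pose proof (COS_bound (t * ln 2)) as Hcos.
  pose proof (sqrt_sqrt 2 ltac:(lra)). pose proof (sqrt_lt_R0 2 ltac:(lra)).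
  assert (Hs2 : sqrt 2 < 3 / 2) by nra.
  nra.
Qed.

Lemma zeta_crit_zero_eta t : zeta_crit_is t (0, 0) -> eta_crit_is t (0, 0).
Proof.
  intros [[a b] [Heta Hdiv]].
  pose proof (eta_factor_crit_norm_neq0 t) as Hnz.
  destruct (eta_factor_crit t) as [c d].
  destruct (Cx_div_eq0 a b c d Hnz Hdiv) as [-> ->]. exact Heta.
Qed.

Theorem mainTheorem1 (t : R) (ht : 0 < t) (hzero : zeta_crit_is t (0, 0)) :
  Un_cv (fun k => Hk k - Dk t k) 0 /\
  (exists gamma : R,
      Un_cv (fun k => Hk k - ln (INR k)) gamma /\
      Un_cv (fun k => Dk t k - ln (INR k)) gamma).
Proof.
  destruct (zeta_crit_zero_eta t hzero) as [Hre Him]; simpl in Hre, Him.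
  assert (HD : Un_cv (fun k => Hk k - Dk t k) 0).
  { apply Un_cv_ext with
      (un := fun k => eta_partial_re t k * eta_partial_re t k
                      + eta_partial_im t k * eta_partial_im t k).
    - intros k. rewrite Hk_sub_Dk_eq_eta_norm. ring.
    - replace 0 with (0 * 0 + 0 * 0) by ring.
      apply CV_plus; apply CV_mult; assumption. }
  split; [exact HD|].
  destruct euler_gamma_exists as [gamma Hgamma].
  exists gamma. split; [exact Hgamma|].
  apply Un_cv_ext with (un := fun k => (Hk k - ln (INR k)) - (Hk k - Dk t k)).
  - intros k. ring.
  - replace gamma with (gamma - 0) by ring. apply CV_minus; assumption.
Qed.
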